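(* Let $q>5$ and let $\mathcal C$ be an $\mathbb F_q$-conic in a Baer subplane $\mathcal B$ of $\mathrm{PG}(2,q^2)$ tangent to $\ell_\infty$, with $\bar T=\mathcal B\cap\ell_\infty\in\mathcal C$. For a point $\bar P\in\ell_\infty$, $\bar P\ne\bar T$, the $\mathbb F_{q^2}$-conic $\mathcal C^+$ meets $\ell_\infty$ in $\bar P$ if and only if in $\mathrm{PG}(4,q^2)$ the twisted cubic $[\mathcal C]^\star$ meets the transversals $g,g^q$ of $\mathcal S$ in the points $P$ and $P^q$.
   Context: Bruck–Bose setting: $\Sigma_\infty$ a hyperplane of $\mathrm{PG}(4,q)$ with regular spread $\mathcal S$; affine points $A$ of $\mathrm{PG}(2,q^2)$ correspond to points $[A]$ of $\mathrm{PG}(4,q)\setminus\Sigma_\infty$, points $\bar T\in\ell_\infty$ to spread lines $[T]$. In $\mathrm{PG}(4,q^2)$ the transversals of $\mathcal S$ are the conjugate lines $g,g^q$ (conjugation $X\mapsto X^q$ of coordinates); for $\bar P\in\ell_\infty$, $P:=[P]^\star\cap g$, so that $[P]^\star=PP^q$ and $\bar P\mapsto P$ is a bijection $\ell_\infty\to g$. An $\mathbb F_q$-conic is a non-degenerate conic of a Baer subplane; $\mathcal C^+$ is the unique non-degenerate conic of $\mathrm{PG}(2,q^2)$ containing the $\mathbb F_q$-conic $\mathcal C$. For $\mathcal C$ through $\bar T=\mathcal B\cap\ell_\infty$, $[\mathcal C]$ is the twisted cubic of $\mathrm{PG}(4,q)$ consisting of $\{[X]:X\in\mathcal C\text{ affine}\}$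 plus one point of $[T]$, and $[\mathcal C]^\star$ its extension to $\mathrm{PG}(4,q^2)$. *)

From HB Require Import structures.
From mathcomp Require Import all_boot all_order all_algebra all_field.
Set Implicit Arguments. Unset Strict Implicit. Unset Printing Implicit Defensive.
Import GRing.Theory.
Local Open Scope ring_scope.

Section BruckBose.
Variable F : finFieldType.   (* F = GF(q^2) *)

(* two nonzero row vectors represent the same projective point *)
Definition pt_eq n (u v : 'rV[F]_n) : bool := (u != 0) && (u == v)%MS.

Definition Fq (q : nat) : pred F := fun x => x ^+ q == x.

(* rational normal curve of degree n: the points (1,t,..,t^n) M, t in S,
   together with the point (0,..,0,1) M (parameter t = infinity) *)
Definition mon n (t : F) : 'rV[F]_n.+1 := \row_(i < n.+1) t ^+ i.
Definition mon_inf n : 'rV[F]_n.+1 := \row_(i < n.+1) ((i : nat) == n)%:R.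
Definition rnc n m (S : pred F) (M : 'M[F]_(n.+1, m)) (v : 'rV[F]_m) : Prop :=
  (exists2 t, S t & pt_eq v (mon n t *m M)) \/ pt_eq v (mon_inf n *m M).

(* non-degenerate conics of PG(2,q^2): images of {(1:t:t^2)} u {(0:0:1)}
   under an invertible 3x3 matrix *)
Definition conic (M : 'M[F]_3) : 'rV[F]_3 -> Prop := rnc (n := 2) predT M.

(* twisted cubics of PG(4,q^2): images of {(1:t:t^2:t^3)} u {(0:0:0:1)}
   under an injective linear map F^4 -> F^5 (a 4x5 matrix of rank 4) *)
Definition twisted_cubic (K : 'M[F]_(4, 5)) : 'rV[F]_5 -> Prop :=
  rnc (n := 3) predT K.

(* Baer subplane of PG(2,q^2): image of PG(2,q) under A in GL(3,q^2) *)
Definition baer_subplane (q : nat) (A : 'M[F]_3) (v : 'rV[F]_3) : Prop :=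
  exists2 w : 'rV[F]_3, (forall i, Fq q (w ord0 i)) & pt_eq v (w *m A).

(* F_q-conic in the Baer subplane baer_subplane q A: image under A of the
   non-degenerate conic (1:t:t^2)N, t in GF(q) u {oo}, of PG(2,q), N in GL(3,q) *)
Definition fq_conic (q : nat) (N A : 'M[F]_3) : 'rV[F]_3 -> Prop :=
  rnc (n := 2) (Fq q) (N *m A).

Definition on_linf (v : 'rV[F]_3) : bool := v ord0 (inord 2) == 0.

(* Bruck--Bose image [X] of an affine point X = (x:y:1), in the coordinates
   (X, X', Y, Y', Z) of PG(4,q^2) in which PG(4,q) is the set of points
   (x, x^q, y, y^q, z), z in GF(q), Sigma_oo is Z = 0 *)
Definition bb (q : nat) (v : 'rV[F]_3) : 'rV[F]_5 :=
  let x := v ord0 (inord 0) / v ord0 (inord 2) in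
  let y := v ord0 (inord 1) / v ord0 (inord 2) in
  \row_(i < 5) [:: x; x ^+ q; y; y ^+ q; 1]`_i.

(* conjugation X -> X^q of PG(4,q^2) (fixing exactly the points of PG(4,q)) *)
Definition conj5 (q : nat) (w : 'rV[F]_5) : 'rV[F]_5 :=
  \row_(i < 5) [:: w ord0 (inord 1) ^+ q; w ord0 (inord 0) ^+ q;
                   w ord0 (inord 3) ^+ q; w ord0 (inord 2) ^+ q;
                   w ord0 (inord 4) ^+ q]`_i.

(* for P = (a:b:0) on l_oo, the point P = [P]^* cap g of the transversal
   g : X' = Y' = Z = 0 of the spread; g^q is X = Y = Z = 0 *)
Definition gpt (v : 'rV[F]_3) : 'rV[F]_5 :=
  \row_(i < 5) [:: v ord0 (inord 0); 0; v ord0 (inord 1); 0; 0]`_i.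

End BruckBose.

(* After a reparametrization over GF(q) that sends T to the parameter oo,
   C = {(1:t:t^2) R | t in GF(q)} u {T = (0:0:1) R}, and tangency of the
   Baer subplane at T forces R_22 = 0, R_12 <> 0 and (1:t:t^2) R affine for
   every t in GF(q).  As q >= 7, a polynomial of degree at most 6 vanishing on
   GF(q) is zero, so any conic through C is the conic of R and any twisted
   cubic through [C] is an explicit one obtained from (1:t:t^2) R by the
   Bruck-Bose map.  The conic meets l_oo in T and in the point of parameter
   s = -R_02/R_12, which is not in GF(q); the cubic meets g and g^q exactly in
   its points of parameters s and s^q, which are P and P^q for that point P. *)

From HB Require Import structures.
From mathcomp Require Import all_boot all_order all_algebra all_field.
From mathcomp Require Import ring.

Set Implicit Arguments.
Unset Strict Implicit.
Unset Printing Implicit Defensive.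
Import GRing.Theory.
Local Open Scope ring_scope.

Section Coordinates.
Variable R : pzRingType.

Lemma eq_row3 (u v : 'rV[R]_3) :
  u ord0 (inord 0) = v ord0 (inord 0) -> u ord0 (inord 1) = v ord0 (inord 1) ->
  u ord0 (inord 2) = v ord0 (inord 2) -> u = v.
Proof.
move=> e0 e1 e2; apply/rowP => i; rewrite -(inord_val i).
by case: i => [[|[|[|k]]] ?].
Qed.

Lemma eq_row4 (u v : 'rV[R]_4) :
  u ord0 (inord 0) = v ord0 (inord 0) -> u ord0 (inord 1) = v ord0 (inord 1) ->
  u ord0 (inord 2) = v ord0 (inord 2) -> u ord0 (inord 3) = v ord0 (inord 3) ->
  u = v.
Proof.
move=> e0 e1 e2 e3; apply/rowP => i; rewrite -(inord_val i).
by case: i => [[|[|[|[|k]]]] ?].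
Qed.

Lemma eq_row5 (u v : 'rV[R]_5) :
  u ord0 (inord 0) = v ord0 (inord 0) -> u ord0 (inord 1) = v ord0 (inord 1) ->
  u ord0 (inord 2) = v ord0 (inord 2) -> u ord0 (inord 3) = v ord0 (inord 3) ->
  u ord0 (inord 4) = v ord0 (inord 4) -> u = v.
Proof.
move=> e0 e1 e2 e3 e4; apply/rowP => i; rewrite -(inord_val i).
by case: i => [[|[|[|[|[|k]]]]] ?].
Qed.

Lemma mulmx_row3E m (w : 'rV[R]_3) (M : 'M[R]_(3, m)) j :
  (w *m M) ord0 j = w ord0 (inord 0) * M (inord 0) j
    + w ord0 (inord 1) * M (inord 1) j + w ord0 (inord 2) * M (inord 2) j.
Proof.
rewrite mxE !big_ord_recl big_ord0 addr0 addrA.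
by congr (w _ _ * M _ _ + w _ _ * M _ _ + w _ _ * M _ _); apply/val_inj;
  rewrite /= inordK.
Qed.

Lemma mulmx_row4E m (w : 'rV[R]_4) (M : 'M[R]_(4, m)) j :
  (w *m M) ord0 j = w ord0 (inord 0) * M (inord 0) j
    + w ord0 (inord 1) * M (inord 1) j + w ord0 (inord 2) * M (inord 2) j
    + w ord0 (inord 3) * M (inord 3) j.
Proof.
rewrite mxE !big_ord_recl big_ord0 addr0 !addrA.
by congr (w _ _ * M _ _ + w _ _ * M _ _ + w _ _ * M _ _ + w _ _ * M _ _);
  apply/val_inj; rewrite /= inordK.
Qed.

End Coordinates.

Section ProjectivePoints.
Variable F : finFieldType.

Lemma pt_eqP n (u v : 'rV[F]_n) :
  reflect (u != 0 /\ exists2 c, c != 0 & v = c *: u) (pt_eq u v).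
Proof.
apply: (iffP andP) => [[u0 /andP[uv vu]] | [u0 [c c0 ->]]].
  split=> //; case/sub_rVP: vu => c vE; exists c => //.
  apply: contra u0 => /eqP c0; move/sub_rVP: uv => [a ->].
  by rewrite vE c0 scale0r scaler0.
by split=> //; apply/eqmxP; exact: eqmx_sym (eqmx_scale u c0).
Qed.

Lemma pt_eq_scale n (u : 'rV[F]_n) c : u != 0 -> c != 0 -> pt_eq u (c *: u).
Proof. by move=> u0 c0; apply/pt_eqP; split=> //; exists c. Qed.

Lemma pt_eq_refl n (u : 'rV[F]_n) : u != 0 -> pt_eq u u.
Proof. by move=> u0; rewrite -{2}[u]scale1r pt_eq_scale ?oner_eq0. Qed.

Lemma pt_eq_sym n (u v : 'rV[F]_n) : pt_eq u v -> pt_eq v u.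
Proof.
case/pt_eqP=> u0 [c c0 ->]; rewrite -{2}[u](scalerK c0).
by apply: pt_eq_scale; rewrite ?invr_eq0 // scaler_eq0 negb_or c0.
Qed.

Lemma pt_eq_trans n (u v w : 'rV[F]_n) : pt_eq u v -> pt_eq v w -> pt_eq u w.
Proof.
case/pt_eqP=> u0 [c c0 ->] /pt_eqP[_ [d d0 ->]].
by rewrite scalerA pt_eq_scale ?mulf_neq0.
Qed.

Lemma pt_eq_scaler n (u v : 'rV[F]_n) c :
  c != 0 -> pt_eq u (c *: v) = pt_eq u v.
Proof.
move=> c0; apply/pt_eqP/pt_eqP => -[u0 [d d0 E]]; split=> //.
  by exists (c^-1 * d); rewrite ?mulf_neq0 ?invr_eq0 // -scalerA -E scalerK.
by exists (c * d); rewrite ?mulf_neq0 // E scalerA.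
Qed.

Lemma pt_eq_mulmx_free n m (u v : 'rV[F]_n) (B : 'M[F]_(n, m)) :
  row_free B -> pt_eq (u *m B) (v *m B) = pt_eq u v.
Proof.
move=> Bf; apply/pt_eqP/pt_eqP => -[u0 [c c0 E]].
  split; first by apply: contra u0 => /eqP->; rewrite mul0mx.
  by exists c => //; apply: (row_free_inj Bf); rewrite /= E scalemxAl.
by split; [rewrite mulmx_free_eq0 | exists c; rewrite // E scalemxAl].
Qed.

Lemma rnc_pt_eq n m S (M : 'M[F]_(n.+1, m)) v w :
  rnc S M v -> pt_eq v w -> rnc S M w.
Proof.
move=> [[t St vt]|vi] /pt_eq_sym vw; [left; exists t | right] => //.
  exact: pt_eq_trans vw vt.
exact: pt_eq_trans vw vi.
Qed.

Lemma rnc_mulmx_free n m p S (M : 'M[F]_(n.+1, m)) (B : 'M[F]_(m, p)) v :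
  row_free B -> rnc S (M *m B) (v *m B) <-> rnc S M v.
Proof.
move=> Bf; have E w : pt_eq (v *m B) (w *m (M *m B)) = pt_eq v (w *m M).
  by rewrite mulmxA pt_eq_mulmx_free.
by split=> -[[t St h]|h]; [left; exists t; rewrite -?E | right; rewrite -?E
  | left; exists t; rewrite ?E | right; rewrite ?E].
Qed.

Lemma monE n (t : F) k : (k <= n)%N -> mon n t ord0 (inord k) = t ^+ k.
Proof. by move=> kn; rewrite mxE inordK. Qed.

Lemma mon_infE n k : (k <= n)%N -> mon_inf F n ord0 (inord k) = (k == n)%:R.
Proof. by move=> kn; rewrite mxE inordK. Qed.

Lemma mon_neq0 n (t : F) : mon n t != 0.
Proof.
by apply/eqP => /rowP /(_ ord0); rewrite !mxE expr0 => /eqP; rewrite oner_eq0.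
Qed.

Lemma mon_inf_neq0 n : mon_inf F n != 0.
Proof.
by apply/eqP => /rowP /(_ ord_max); rewrite !mxE eqxx => /eqP; rewrite oner_eq0.
Qed.

Lemma mon_mulmx_neq0 n m (t : F) (B : 'M[F]_(n.+1, m)) :
  row_free B -> mon n t *m B != 0.
Proof. by move=> Bf; rewrite mulmx_free_eq0 // mon_neq0. Qed.

Lemma mon_inf_mulmx_neq0 n m (B : 'M[F]_(n.+1, m)) :
  row_free B -> mon_inf F n *m B != 0.
Proof. by move=> Bf; rewrite mulmx_free_eq0 // mon_inf_neq0. Qed.

Lemma rnc_mon n m (S : pred F) (M : 'M[F]_(n.+1, m)) t :
  row_free M -> S t -> rnc S M (mon n t *m M).
Proof. by move=> Mf St; left; exists t; rewrite // pt_eq_refl ?mon_mulmx_neq0. Qed.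

End ProjectivePoints.

Section SubfieldFq.
Variables (F : finFieldType) (q : nat).
Hypothesis cardF : #|F| = (q ^ 2)%N.

Lemma pchar_nat_q : [pchar F].-nat q.
Proof.
have [p p_pr pcharFp] := finPcharP F.
have : p.-nat #|F| by rewrite -cardsT; apply: pprimeChar_pgroup pcharFp.
by rewrite cardF -(eq_pnat _ (pcharf_eq pcharFp)) pnatX => /orP[].
Qed.

Lemma q_gt1 : (1 < q)%N.
Proof. by have := card_finNzRing_gt1 F; rewrite cardF; case: q => [|[]]. Qed.

Lemma frobD (x y : F) : (x + y) ^+ q = x ^+ q + y ^+ q.
Proof. exact: exprDn_pchar pchar_nat_q. Qed.

Lemma frobN (x : F) : (- x) ^+ q = - x ^+ q.
Proof. exact: exprNn_pchar pchar_nat_q. Qed.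

Lemma frobK (x : F) : x ^+ q ^+ q = x.
Proof. by rewrite -exprM mulnn -cardF expf_card. Qed.

Lemma Fq0 : Fq q (0 : F).
Proof. by rewrite /Fq expr0n eqn0Ngt ltnW ?q_gt1. Qed.

Lemma Fq1 : Fq q (1 : F).
Proof. by rewrite /Fq expr1n. Qed.

Lemma FqD (x y : F) : Fq q x -> Fq q y -> Fq q (x + y).
Proof. by rewrite /Fq frobD => /eqP-> /eqP->. Qed.

Lemma FqN (x : F) : Fq q x -> Fq q (- x).
Proof. by rewrite /Fq frobN => /eqP->. Qed.

Lemma FqM (x y : F) : Fq q x -> Fq q y -> Fq q (x * y).
Proof. by rewrite /Fq exprMn => /eqP-> /eqP->. Qed.

Lemma FqV (x : F) : Fq q x -> Fq q x^-1.
Proof. by rewrite /Fq exprVn => /eqP->. Qed.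

Lemma FqX (x : F) k : Fq q x -> Fq q (x ^+ k).
Proof. by rewrite /Fq -exprM mulnC exprM => /eqP->. Qed.

Lemma Fq_mulmx m n p (A : 'M[F]_(m, n)) (B : 'M[F]_(n, p)) :
  (forall i j, Fq q (A i j)) -> (forall i j, Fq q (B i j)) ->
  forall i j, Fq q ((A *m B) i j).
Proof.
move=> FqA FqB i j; rewrite mxE; apply: (big_ind (Fq q)) => //.
- exact: Fq0.
- exact: FqD.
- by move=> k _; apply: FqM.
Qed.

(* [x |-> x^q - x] is additive with kernel [Fq q] and image inside the roots
   of [X^q + X], so [q^2 <= q * #|[set x : F | Fq q x]|]. *)
Lemma card_Fq_ge : (q <= #|[set x : F | Fq q x]|)%N.
Proof.
pose f (x : F) := x ^+ q - x.
pose Im := [set f x | x in F].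
have fB x y : f (x - y) = f x - f y by rewrite /f frobD frobN; ring.
have card_Im : (#|Im| <= q)%N.
  pose p : {poly F} := 'X^q + 'X.
  have size_p : size p = q.+1.
    by rewrite size_polyDl ?size_polyXn // size_polyX ltnS q_gt1.
  have := @max_poly_roots _ p (enum Im); rewrite size_p ltnS cardE; apply.
  - by rewrite -size_poly_eq0 size_p.
  - apply/allP => y; rewrite mem_enum => /imsetP[x _ ->].
    by rewrite /root hornerD hornerXn hornerX /f frobD frobN frobK; apply/eqP; ring.
  - exact: enum_uniq.
pose z (y : F) := odflt 0 [pick x | f x == y].
have fz x : f (z (f x)) = f x.
  by rewrite /z; case: pickP => [x' /eqP //|/(_ x)]; rewrite eqxx.
pose g (x : F) := (f x, x - z (f x)).
have g_inj : injective g by move=> x1 x2 [e1]; rewrite e1 => /addIr.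
have : (#|F| <= #|Im| * #|[set x : F | Fq q x]|)%N.
  rewrite -cardsX -(card_imset predT g_inj); apply: subset_leq_card.
  apply/subsetP => _ /imsetP[x _ ->]; rewrite !inE /=.
  by rewrite imset_f //= /Fq -subr_eq0 -/(f _) fB fz subrr.
rewrite cardF => le_q2; rewrite -(leq_pmul2l (ltnW q_gt1)).
by apply: leq_trans le_q2 _; rewrite leq_mul2r card_Im orbT.
Qed.

Lemma Fq_poly_eq0 (p : {poly F}) :
  (size p <= q)%N -> (forall t, Fq q t -> p.[t] = 0) -> p = 0.
Proof.
move=> size_p p_Fq; apply/eqP; apply: contraT => p0.
have := @max_poly_roots _ p (enum [set x : F | Fq q x]) p0; rewrite -cardE.
have -> : all (root p) (enum [set x : F | Fq q x]).
  by apply/allP => t; rewrite mem_enum inE => /p_Fq /eqP.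
move/(_ isT (enum_uniq _))/leq_trans/(_ size_p).
by rewrite ltnNge card_Fq_ge.
Qed.

Lemma Fq_Poly_coef0 (s : seq F) :
  (size s <= q)%N -> (forall t, Fq q t -> (Poly s).[t] = 0) ->
  forall i, s`_i = 0.
Proof.
move=> size_s s_Fq i; rewrite -coef_Poly (Fq_poly_eq0 _ s_Fq) ?coef0 //.
exact: leq_trans (size_Poly s) size_s.
Qed.

Lemma q_gt5_ge7 : (5 < q)%N -> (7 <= q)%N.
Proof.
move=> q_gt5; rewrite ltn_neqAle q_gt5 andbT; apply/eqP => q6.
have [p _ /pcharf_eq/eq_pnat Ep] := finPcharP F.
have := pchar_nat_q; rewrite -q6 Ep => p6.
have := pnat_dvd (isT : (2 %| 6)%N) p6; have := pnat_dvd (isT : (3 %| 6)%N) p6.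
by rewrite !pnatE // !inE => /eqP <-.
Qed.

End SubfieldFq.

Section Conics.
Variable F : finFieldType.

Definition conic_form (w : 'rV[F]_3) : F :=
  w ord0 (inord 0) * w ord0 (inord 2) - w ord0 (inord 1) ^+ 2.

Lemma conic_formZ a w : conic_form (a *: w) = a ^+ 2 * conic_form w.
Proof. by rewrite /conic_form !mxE; ring. Qed.

Lemma conic_form_mon t : conic_form (mon 2 t) = 0.
Proof. by rewrite /conic_form !monE //; ring. Qed.

Lemma conic_form_mon_inf : conic_form (mon_inf F 2) = 0.
Proof. by rewrite /conic_form !mon_infE //=; ring. Qed.

Lemma conic1P w : w != 0 -> conic 1%:M w <-> conic_form w = 0.
Proof.
move=> w0; split.
  case=> [[t _]|]; rewrite mulmx1 => /pt_eq_sym/pt_eqP[_ [c _ ->]];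
  by rewrite conic_formZ ?conic_form_mon ?conic_form_mon_inf mulr0.
rewrite /conic_form; set x := w ord0 (inord 0); set y := w ord0 (inord 1).
set z := w ord0 (inord 2) => /eqP; rewrite subr_eq0 => /eqP xz.
have [x0|x0] := eqVneq x 0.
  have y0 : y = 0 by apply/eqP; rewrite -sqrf_eq0 -xz x0 mul0r.
  right; rewrite mulmx1; have -> : w = z *: mon_inf F 2.
    by apply: eq_row3; rewrite !mxE !inordK //= -/x -/y -/z ?x0 ?y0; ring.
  apply/pt_eq_sym/pt_eq_scale; first exact: mon_inf_neq0.
  by apply: contra w0 => /eqP z0; apply/eqP/eq_row3; rewrite !mxE.
left; exists (y / x) => //; rewrite mulmx1; have -> : w = x *: mon 2 (y / x).
  apply: eq_row3; rewrite !mxE !inordK //= -/x -/y -/z; first by field.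
  - by field.
  - by rewrite expr_div_n -xz; field.
by apply/pt_eq_sym/pt_eq_scale; rewrite ?mon_neq0.
Qed.

Lemma conicP (M : 'M[F]_3) v :
  M \in unitmx -> v != 0 -> conic M v <-> conic_form (v *m invmx M) = 0.
Proof.
move=> Mu v0; have Mf : row_free M by rewrite row_free_unit.
have vE : v = v *m invmx M *m M by rewrite mulmxKV.
rewrite -conic1P; last by apply: contra v0 => /eqP w0; rewrite vE w0 mul0mx.
by rewrite {1}vE /conic -(rnc_mulmx_free predT 1%:M (v *m invmx M) Mf) mul1mx.
Qed.

End Conics.

Section ConicsOverFq.
Variables (F : finFieldType) (q : nat).
Hypotheses (cardF : #|F| = (q ^ 2)%N) (q_ge5 : (5 <= q)%N).

Section ConicFormMulmx.
Variable S : 'M[F]_3.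
Hypothesis S_unit : S \in unitmx.
Local Notation s i j := (S (inord i) (inord j)).

Lemma conic_form_mulmx :
  (forall t, Fq q t -> conic_form (mon 2 t *m S) = 0) ->
  exists2 b, b != 0 & forall w, conic_form (w *m S) = b * conic_form w.
Proof.
move=> S_Fq.
(* the coefficients of the quartic [t |-> conic_form (mon 2 t *m S)]; once they
   vanish, what is left of [conic_form (w *m S)] is [b * conic_form w] *)
pose c := [:: s 0 0 * s 0 2 - s 0 1 ^+ 2;
  s 0 0 * s 1 2 + s 1 0 * s 0 2 - 2%:R * s 0 1 * s 1 1;
  s 0 0 * s 2 2 + s 1 0 * s 1 2 + s 2 0 * s 0 2 - s 1 1 ^+ 2
    - 2%:R * s 0 1 * s 2 1;
  s 1 0 * s 2 2 + s 2 0 * s 1 2 - 2%:R * s 1 1 * s 2 1;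
  s 2 0 * s 2 2 - s 2 1 ^+ 2].
have c_eq0 i : c`_i = 0.
  apply: (Fq_Poly_coef0 cardF) => // t Ft.
  by rewrite -(S_Fq t Ft) horner_Poly /conic_form !mulmx_row3E !monE //=; ring.
pose b := s 0 0 * s 2 2 + s 2 0 * s 0 2 - 2%:R * s 0 1 * s 2 1.
have formS w : conic_form (w *m S) = b * conic_form w.
  have -> : conic_form (w *m S) = b * conic_form w
      + (c`_0 * w ord0 (inord 0) ^+ 2 + c`_1 * w ord0 (inord 0) * w ord0 (inord 1)
         + c`_2 * w ord0 (inord 1) ^+ 2 + c`_3 * w ord0 (inord 1) * w ord0 (inord 2)
         + c`_4 * w ord0 (inord 2) ^+ 2).
    by rewrite /conic_form !mulmx_row3E /c /b /=; ring.
  by rewrite !c_eq0; ring.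
exists b => //; apply/eqP => b0.
have e1 : conic_form (mon 2 0 + mon_inf F 2) = 1.
  by rewrite /conic_form !mxE !inordK //=; ring.
move: (formS ((mon 2 0 + mon_inf F 2) *m invmx S)).
by rewrite mulmxKV // e1 b0 mul0r => /eqP; rewrite oner_eq0.
Qed.

End ConicFormMulmx.

Lemma conic_eq (M R : 'M[F]_3) : M \in unitmx -> R \in unitmx ->
  (forall t, Fq q t -> conic M (mon 2 t *m R)) ->
  forall v, v != 0 -> conic M v <-> conic R v.
Proof.
move=> Mu Ru M_C; set S := R *m invmx M.
have S_unit : S \in unitmx by rewrite unitmx_mul Ru unitmx_inv.
have [t Ft|b b0 formS] := conic_form_mulmx S_unit.
  rewrite /S mulmxA; apply/conicP => //; last exact: M_C.
  by rewrite mon_mulmx_neq0 ?row_free_unit.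
move=> v v0; rewrite (conicP Mu v0) (conicP Ru v0).
have -> : v *m invmx M = v *m invmx R *m S by rewrite /S mulmxA mulmxKV.
by rewrite formS; split=> [/eqP|->]; rewrite ?mulr0 // mulf_eq0 (negPf b0) => /eqP.
Qed.

End ConicsOverFq.

Section TwistedCubics.
Variable F : finFieldType.

Definition cubic_minor (w : 'rV[F]_4) (a b c d : nat) : F :=
  w ord0 (inord a) * w ord0 (inord b) - w ord0 (inord c) * w ord0 (inord d).

Definition cubic_minors (w : 'rV[F]_4) : 'rV[F]_3 :=
  \row_(k < 3)
    [:: cubic_minor w 0 2 1 1; cubic_minor w 1 3 2 2; cubic_minor w 0 3 1 2]`_k.

Lemma cubic_minors_eq0 w : cubic_minors w = 0 <->
  [/\ cubic_minor w 0 2 1 1 = 0, cubic_minor w 1 3 2 2 = 0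
    & cubic_minor w 0 3 1 2 = 0].
Proof.
split=> [/rowP m0 | [m1 m2 m3]]; last by apply: eq_row3; rewrite !mxE !inordK.
by split; [move: (m0 (inord 0)) | move: (m0 (inord 1)) | move: (m0 (inord 2))];
  rewrite !mxE inordK.
Qed.

Lemma cubic_minorsZ c w : cubic_minors (c *: w) = c ^+ 2 *: cubic_minors w.
Proof.
apply/rowP => k; rewrite !mxE.
by case: k => [[|[|[|//]]] _] /=; rewrite /cubic_minor !mxE; ring.
Qed.

Lemma cubic_minors_mon t : cubic_minors (mon 3 t) = 0.
Proof. by apply/cubic_minors_eq0; rewrite /cubic_minor !monE //; split; ring. Qed.

Lemma cubic_minors_mon_inf : cubic_minors (mon_inf F 3) = 0.
Proof.
by apply/cubic_minors_eq0; rewrite /cubic_minor !mon_infE //=; split; ring.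
Qed.

Lemma cubic1P w : w != 0 -> rnc predT (1%:M : 'M[F]_4) w <-> cubic_minors w = 0.
Proof.
move=> w0; split.
  case=> [[t _]|]; rewrite mulmx1 => /pt_eq_sym/pt_eqP[_ [c _ ->]];
  by rewrite cubic_minorsZ ?cubic_minors_mon ?cubic_minors_mon_inf scaler0.
case/cubic_minors_eq0; rewrite /cubic_minor.
set x0 := w ord0 (inord 0); set x1 := w ord0 (inord 1).
set x2 := w ord0 (inord 2); set x3 := w ord0 (inord 3).
move=> /eqP; rewrite subr_eq0 => /eqP e02 /eqP; rewrite subr_eq0 => /eqP e13.
move=> /eqP; rewrite subr_eq0 => /eqP e03.
have [x0_0|x0_neq0] := eqVneq x0 0.
  have x1_0 : x1 = 0.
    by apply/eqP; rewrite -[_ == 0]orbb -mulf_eq0 -e02 x0_0 mul0r.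
  have x2_0 : x2 = 0.
    by apply/eqP; rewrite -[_ == 0]orbb -mulf_eq0 -e13 x1_0 mul0r.
  right; rewrite mulmx1; have -> : w = x3 *: mon_inf F 3.
    apply: eq_row4; rewrite !mxE !inordK //= -/x0 -/x1 -/x2 -/x3;
    by rewrite ?x0_0 ?x1_0 ?x2_0; ring.
  apply/pt_eq_sym/pt_eq_scale; first exact: mon_inf_neq0.
  by apply: contra w0 => /eqP x3_0; apply/eqP/eq_row4; rewrite !mxE.
left; exists (x1 / x0) => //; rewrite mulmx1.
have e2 : x2 = x1 * x1 / x0 by rewrite -e02; field.
have e3 : x3 = x1 * x2 / x0 by rewrite -e03; field.
have -> : w = x0 *: mon 3 (x1 / x0).
  apply: eq_row4; rewrite !mxE !inordK //= -/x0 -/x1 -/x2 -/x3; try field => //.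
    by rewrite e2; field.
  by rewrite e3 e2; field.
by apply/pt_eq_sym/pt_eq_scale; rewrite ?mon_neq0.
Qed.

Lemma twisted_cubic_sub (K : 'M[F]_(4, 5)) v : twisted_cubic K v -> (v <= K)%MS.
Proof.
by case=> [[t _]|] /pt_eq_sym/pt_eqP[_ [c _ ->]]; rewrite scalemx_sub ?submxMl.
Qed.

Lemma twisted_cubicP (K : 'M[F]_(4, 5)) v : row_free K -> v != 0 ->
  twisted_cubic K v <-> (v <= K)%MS /\ cubic_minors (v *m pinvmx K) = 0.
Proof.
move=> Kf v0.
suff sub_key : (v <= K)%MS ->
    twisted_cubic K v <-> cubic_minors (v *m pinvmx K) = 0.
  split=> [vC | [vK]]; last by rewrite sub_key.
  by have vK := twisted_cubic_sub vC; rewrite -sub_key.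
move=> vK; have vE : v = v *m pinvmx K *m K by rewrite mulmxKpV.
rewrite -cubic1P; last by apply: contra v0 => /eqP w0; rewrite vE w0 mul0mx.
by rewrite -(rnc_mulmx_free predT 1%:M _ Kf) mul1mx -vE.
Qed.

End TwistedCubics.

Section TwistedCubicsOverFq.
Variables (F : finFieldType) (q : nat).
Hypotheses (cardF : #|F| = (q ^ 2)%N) (q_ge7 : (7 <= q)%N).

Lemma mon3_mulmx_eq0 m (Z : 'M[F]_(4, m)) :
  (forall t, Fq q t -> mon 3 t *m Z = 0) -> Z = 0.
Proof.
move=> Z_Fq; apply/matrixP => i j; rewrite mxE -(inord_val i).
pose s := [:: Z (inord 0) j; Z (inord 1) j; Z (inord 2) j; Z (inord 3) j].
have s_eq0 k : s`_k = 0.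
  apply: (Fq_Poly_coef0 cardF); first exact: leq_trans q_ge7.
  move=> t Ft; have /rowP/(_ j) := Z_Fq t Ft.
  by rewrite mulmx_row4E !monE // mxE horner_Poly => E; rewrite -[RHS]E /=; ring.
case: i => [[|[|[|[|//]]]] ?] /=; [exact: (s_eq0 0%N) | exact: (s_eq0 1%N)
  | exact: (s_eq0 2%N) | exact: (s_eq0 3%N)].
Qed.

Definition minor_polar (L : 'M[F]_4) (a b c d i j : nat) : F :=
  L (inord i) (inord a) * L (inord j) (inord b)
  + L (inord j) (inord a) * L (inord i) (inord b)
  - L (inord i) (inord c) * L (inord j) (inord d)
  - L (inord j) (inord c) * L (inord i) (inord d).

Section CubicMinorMulmx.
Variables (L : 'M[F]_4) (a b c d : nat).
Local Notation P i j := (minor_polar L a b c d i j).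
Local Notation Q i := (cubic_minor (row (inord i) L) a b c d).

Lemma cubic_minor_mulmx :
  (forall t, Fq q t -> cubic_minor (mon 3 t *m L) a b c d = 0) ->
  forall x, cubic_minor (x *m L) a b c d = P 0 2 * cubic_minor x 0 2 1 1
    + P 1 3 * cubic_minor x 1 3 2 2 + P 0 3 * cubic_minor x 0 3 1 2.
Proof.
move=> L_Fq.
(* the coefficients of the sextic [t |-> cubic_minor (mon 3 t *m L) a b c d] *)
pose s := [:: Q 0; P 0 1; P 0 2 + Q 1; P 0 3 + P 1 2; P 1 3 + Q 2; P 2 3; Q 3].
have s_eq0 k : s`_k = 0.
  apply: (Fq_Poly_coef0 cardF) => // t Ft; rewrite -(L_Fq t Ft) horner_Poly.
  by rewrite /s /minor_polar /cubic_minor !mulmx_row4E !monE // !mxE /=; ring.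
move=> x; have -> : cubic_minor (x *m L) a b c d =
    P 0 2 * cubic_minor x 0 2 1 1 + P 1 3 * cubic_minor x 1 3 2 2
    + P 0 3 * cubic_minor x 0 3 1 2
    + (s`_0 * x ord0 (inord 0) ^+ 2 + s`_1 * x ord0 (inord 0) * x ord0 (inord 1)
       + s`_2 * x ord0 (inord 1) ^+ 2 + s`_3 * x ord0 (inord 1) * x ord0 (inord 2)
       + s`_4 * x ord0 (inord 2) ^+ 2 + s`_5 * x ord0 (inord 2) * x ord0 (inord 3)
       + s`_6 * x ord0 (inord 3) ^+ 2).
  by rewrite /s /minor_polar /cubic_minor !mulmx_row4E !mxE /=; ring.
by rewrite !s_eq0; ring.
Qed.

End CubicMinorMulmx.

Lemma cubic_minors_mulmx_eq0 (L : 'M[F]_4) : L \in unitmx ->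
  (forall t, Fq q t -> cubic_minors (mon 3 t *m L) = 0) ->
  forall x, cubic_minors (x *m L) = 0 <-> cubic_minors x = 0.
Proof.
move=> L_unit L_Fq; have L_Fq' t Ft := (cubic_minors_eq0 _).1 (L_Fq t Ft).
have E1 := @cubic_minor_mulmx L 0 2 1 1
  (fun t Ft => let: And3 e _ _ := L_Fq' t Ft in e).
have E2 := @cubic_minor_mulmx L 1 3 2 2
  (fun t Ft => let: And3 _ e _ := L_Fq' t Ft in e).
have E3 := @cubic_minor_mulmx L 0 3 1 2
  (fun t Ft => let: And3 _ _ e := L_Fq' t Ft in e).
pose T : 'M[F]_3 := \matrix_(i < 3, k < 3) (nth [::] [::
  [:: minor_polar L 0 2 1 1 0 2; minor_polar L 1 3 2 2 0 2;
      minor_polar L 0 3 1 2 0 2];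
  [:: minor_polar L 0 2 1 1 1 3; minor_polar L 1 3 2 2 1 3;
      minor_polar L 0 3 1 2 1 3];
  [:: minor_polar L 0 2 1 1 0 3; minor_polar L 1 3 2 2 0 3;
      minor_polar L 0 3 1 2 0 3]]
  i)`_k.
have minorsT x : cubic_minors (x *m L) = cubic_minors x *m T.
  by apply: eq_row3; rewrite mulmx_row3E !mxE !inordK //= ?E1 ?E2 ?E3; ring.
(* Every [cubic_minors y = cubic_minors (y *m invmx L) *m T] lies in the row
   space of [T], and these values span [F^3]. *)
have T_unit : T \in unitmx.
  rewrite -unitmx_tr -row_free_unit; apply/inj_row_free => c cT0.
  have minors_c y : (cubic_minors y *m c^T) ord0 ord0 = 0.
    rewrite -[y](mulmxKV L_unit) minorsT -mulmxA -[T]trmxK -trmx_mul cT0.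
    by rewrite trmx0 mulmx0 mxE.
  have lin (z e k : F) : e = 0 -> z = k * e -> z = 0 by move=> -> ->; rewrite mulr0.
  have := minors_c (\row_i [:: 0; 1; 0; 0]`_i).
  have := minors_c (\row_i [:: 0; 0; 1; 0]`_i).
  have := minors_c (\row_i [:: 1; 0; 0; 1]`_i).
  rewrite !mulmx_row3E /cubic_minors /cubic_minor !mxE !inordK //= => e2 e1 e0.
  apply: eq_row3; rewrite mxE.
  - by apply: (lin _ _ (-1) e0); ring.
  - by apply: (lin _ _ (-1) e1); ring.
  - by apply: (lin _ _ 1 e2); ring.
move=> x; rewrite minorsT; split=> [/eqP | ->]; last exact: mul0mx.
by rewrite mulmx_free_eq0 ?row_free_unit // => /eqP.
Qed.

Lemma twisted_cubic_eq (K0 K : 'M[F]_(4, 5)) : row_free K0 -> row_free K ->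
  (forall t, Fq q t -> twisted_cubic K (mon 3 t *m K0)) ->
  forall v, v != 0 -> twisted_cubic K v <-> twisted_cubic K0 v.
Proof.
move=> K0f Kf K_Fq.
have K_Fq' t Ft := (twisted_cubicP Kf (mon_mulmx_neq0 t K0f)).1 (K_Fq t Ft).
have K0_K : (K0 <= K)%MS.
  rewrite submxE; apply/eqP/mon3_mulmx_eq0 => t Ft.
  by rewrite mulmxA; apply/eqP; rewrite -submxE; case: (K_Fq' t Ft).
set L := K0 *m pinvmx K; have LK : L *m K = K0 by rewrite mulmxKpV.
have L_unit : L \in unitmx.
  by rewrite -row_free_unit -row_leq_rank -(mxrankMfree _ Kf) LK row_leq_rank.
have K_K0 : (K <= K0)%MS by rewrite -[K in (K <= _)%MS](mulKmx L_unit) LK submxMl.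
have L_Fq t : Fq q t -> cubic_minors (mon 3 t *m L) = 0.
  by move=> Ft; rewrite mulmxA; case: (K_Fq' t Ft).
move=> v v0; rewrite (twisted_cubicP Kf v0) (twisted_cubicP K0f v0).
have [vK0|vK0] := boolP (v <= K0)%MS; last first.
  by split=> -[vK]; rewrite // (submx_trans vK K_K0) in vK0.
have vE : v = v *m pinvmx K0 *m L *m K by rewrite -mulmxA LK mulmxKpV.
rewrite {2}vE mulmxKp // cubic_minors_mulmx_eq0 //.
by split=> -[]; split=> //; apply: submx_trans K0_K.
Qed.

End TwistedCubicsOverFq.

Section Reparametrization.
Variables (F : finFieldType) (q : nat).
Hypothesis cardF : #|F| = (q ^ 2)%N.

(* The change of parameter [t = t0 + 1/u] of the conic [mon 2], which sends
   [u = 0] to the point at infinity and [u = oo] to the point [t0]. *)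
Definition reparam_mx (t0 : F) : 'M[F]_3 := \matrix_(i < 3, j < 3)
  (nth [::] [:: [:: 0; 0; 1]; [:: 0; 1; 2%:R * t0]; [:: 1; t0; t0 ^+ 2]] i)`_j.

Lemma mon_reparam t0 u :
  u != 0 -> mon 2 u *m reparam_mx t0 = u ^+ 2 *: mon 2 (t0 + u^-1).
Proof.
by move=> u0; apply: eq_row3; rewrite !mulmx_row3E !mxE !inordK //=; field.
Qed.

Lemma mon0_reparam t0 : mon 2 0 *m reparam_mx t0 = mon_inf F 2.
Proof. by apply: eq_row3; rewrite !mulmx_row3E !mxE !inordK //=; ring. Qed.

Lemma mon_inf_reparam t0 : mon_inf F 2 *m reparam_mx t0 = mon 2 t0.
Proof. by apply: eq_row3; rewrite !mulmx_row3E !mxE !inordK //=; ring. Qed.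

Lemma reparam_mx_unit t0 : reparam_mx t0 \in unitmx.
Proof.
rewrite -row_free_unit; apply: inj_row_free => w wP.
have e k : (k < 3)%N -> (w *m reparam_mx t0) ord0 (inord k) = 0.
  by rewrite wP mxE.
move: (e 0%N isT) (e 1%N isT) (e 2%N isT); rewrite !mulmx_row3E !mxE !inordK //=.
rewrite !(mulr0, mul0r, mulr1, add0r, addr0) => e0 e1 e2.
have w1 : w ord0 (inord 1) = 0 by rewrite -e1 e0; ring.
have w0 : w ord0 (inord 0) = 0 by rewrite -e2 w1 e0; ring.
by apply: eq_row3; rewrite !mxE.
Qed.

Lemma reparam_mx_Fq t0 : Fq q t0 -> forall i j, Fq q (reparam_mx t0 i j).
Proof.
move=> Ft0 i j; rewrite mxE.
have F0 := Fq0 cardF; have F1 : Fq q (1 : F) by exact: Fq1.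
case: i => [[|[|[|i]]] ?] //=; case: j => [[|[|[|j]]] ?] //=.
- by apply: FqM => //; apply: (FqD cardF).
- exact: FqX.
Qed.

Lemma rnc_reparam m t0 (M : 'M[F]_(3, m)) : Fq q t0 ->
  forall v, rnc (Fq q) (reparam_mx t0 *m M) v <-> rnc (Fq q) M v.
Proof.
move=> Ft0 v; split.
  case=> [[u Fu]|]; rewrite mulmxA; last first.
    by rewrite mon_inf_reparam; left; exists t0.
  have [->|u0] := eqVneq u 0; first by rewrite mon0_reparam; right.
  rewrite mon_reparam // -scalemxAl pt_eq_scaler ?expf_neq0 // => vE.
  by left; exists (t0 + u^-1) => //; apply: (FqD cardF) => //; apply: FqV.
case=> [[t Ft]|vE]; last first.
  by left; exists 0; rewrite ?(Fq0 cardF) // mulmxA mon0_reparam.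
have [<-|tt0] := eqVneq t t0; first by right; rewrite mulmxA mon_inf_reparam.
have d0 : t - t0 != 0 by rewrite subr_eq0.
left; exists (t - t0)^-1; first by apply/FqV/(FqD cardF) => //; apply: (FqN cardF).
rewrite mulmxA mon_reparam ?invr_eq0 // invrK subrKC.
by rewrite -scalemxAl pt_eq_scaler // expf_neq0 ?invr_eq0.
Qed.

Lemma rnc_Fq_at_inf (M : 'M[F]_3) (T : 'rV[F]_3) : rnc (Fq q) M T ->
  exists2 N : 'M[F]_3, [/\ N \in unitmx, forall i j, Fq q (N i j)
    & forall v, rnc (Fq q) (N *m M) v <-> rnc (Fq q) M v]
  & pt_eq T (mon_inf F 2 *m (N *m M)).
Proof.
case=> [[t0 Ft0 T_t0]|T_inf].
  exists (reparam_mx t0); last by rewrite mulmxA mon_inf_reparam.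
  split; [exact: reparam_mx_unit | exact: reparam_mx_Fq | exact: rnc_reparam].
exists 1%:M; last by rewrite mul1mx.
split=> [||v]; rewrite ?mul1mx ?unitmx1 // => i j.
by rewrite mxE; case: eqP => _; [exact: Fq1 | exact: (Fq0 cardF)].
Qed.

End Reparametrization.

Section TangentAtInfinity.
Variables (F : finFieldType) (q : nat) (R : 'M[F]_3) (T : 'rV[F]_3).
Hypotheses (cardF : #|F| = (q ^ 2)%N) (R_unit : R \in unitmx).
Hypothesis T_linf : on_linf T.
Hypothesis B_tangent : forall w : 'rV[F]_3, (forall j, Fq q (w ord0 j)) -> w != 0 ->
  on_linf (w *m R) -> pt_eq (w *m R) T.
Hypothesis T_inf : pt_eq T (mon_inf F 2 *m R).
Local Notation r i j := (R (inord i) (inord j)).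

Lemma tangent_r22 : r 2 2 = 0.
Proof.
case/pt_eqP: T_inf => _ [c _ /rowP /(_ (inord 2))].
rewrite mulmx_row3E !mon_infE //= [RHS]mxE (eqP T_linf).
by rewrite mulr0 !mul0r !add0r mul1r.
Qed.

Lemma baer_linf_inf (w : 'rV[F]_3) : (forall j, Fq q (w ord0 j)) -> w != 0 ->
  on_linf (w *m R) -> exists c, w = c *: mon_inf F 2.
Proof.
move=> w_Fq w0 /(B_tangent w_Fq w0)/pt_eq_trans/(_ T_inf)/pt_eqP[_ [c c0 E]].
exists c^-1; apply: (row_free_inj (A := R)); first by rewrite row_free_unit.
by rewrite /= -scalemxAl E scalerK.
Qed.

Lemma tangent_r12 : r 1 2 != 0.
Proof.
apply/eqP => r12; pose e1 : 'rV[F]_3 := \row_i [:: 0; 1; 0]`_i.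
have [|||c /rowP /(_ (inord 1))] := @baer_linf_inf e1.
- move=> j; rewrite mxE; case: j => [[|[|[|j]]] ?] //=; first exact: (Fq0 cardF).
  + exact: Fq1.
  + exact: (Fq0 cardF).
- apply/eqP => /rowP /(_ (inord 1)); rewrite !mxE inordK //=.
  exact/eqP/oner_neq0.
- by rewrite /on_linf mulmx_row3E ![e1 _ _]mxE !inordK //= r12; apply/eqP; ring.
by rewrite !mxE !inordK //= mulr0; apply/eqP/oner_neq0.
Qed.

Lemma tangent_affine t : Fq q t -> r 0 2 + r 1 2 * t != 0.
Proof.
move=> Ft; apply/eqP => zt.
have [|||c /rowP /(_ (inord 0))] := @baer_linf_inf (mon 2 t).
- by move=> j; rewrite mxE; apply: FqX.
- exact: mon_neq0.
- rewrite /on_linf mulmx_row3E !monE // tangent_r22 mulr0 addr0 expr0 mul1r.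
  by rewrite expr1 [t * _]mulrC zt.
by rewrite !mxE !inordK //= mulr0; apply/eqP/oner_neq0.
Qed.

End TangentAtInfinity.

Lemma fq_conic_tangent_normal_form (F : finFieldType) (q : nat)
    (A N : 'M[F]_3) (T : 'rV[F]_3) :
  #|F| = (q ^ 2)%N -> A \in unitmx -> N \in unitmx -> (forall i j, Fq q (N i j)) ->
  on_linf T -> (forall v, baer_subplane q A v -> on_linf v -> pt_eq v T) ->
  fq_conic q N A T ->
  exists R : 'M[F]_3, [/\ R \in unitmx,
    forall v, rnc (Fq q) R v <-> fq_conic q N A v,
    pt_eq T (mon_inf F 2 *m R)
    & [/\ R (inord 2) (inord 2) = 0, R (inord 1) (inord 2) != 0
        & forall t, Fq q t ->
            R (inord 0) (inord 2) + R (inord 1) (inord 2) * t != 0]].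
Proof.
move=> cardF A_unit N_unit N_Fq T_linf B_tangent T_C.
have [N' [N'_unit N'_Fq C_N'] T_inf] := rnc_Fq_at_inf cardF T_C.
have R_unit : N' *m (N *m A) \in unitmx.
  by rewrite !unitmx_mul N'_unit N_unit A_unit.
have R_tangent (w : 'rV_3) : (forall j, Fq q (w ord0 j)) -> w != 0 ->
    on_linf (w *m (N' *m (N *m A))) -> pt_eq (w *m (N' *m (N *m A))) T.
  move=> w_Fq w0 /B_tangent; apply; exists (w *m N' *m N).
    by move=> j; apply: Fq_mulmx => //; apply: Fq_mulmx => // i; rewrite [i]ord1.
  by rewrite -!mulmxA pt_eq_refl // mulmx_free_eq0 ?row_free_unit.
exists (N' *m (N *m A)); split=> //; split.
- exact: tangent_r22 T_linf T_inf.
- exact: tangent_r12 cardF R_unit R_tangent T_inf.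
- exact: tangent_affine R_unit T_linf R_tangent T_inf.
Qed.

Section BruckBoseCoordinates.
Variables (F : finFieldType) (q : nat).

Lemma bbE (v : 'rV[F]_3) k : (k < 5)%N -> bb q v ord0 (inord k) =
  [:: v ord0 (inord 0) / v ord0 (inord 2);
      (v ord0 (inord 0) / v ord0 (inord 2)) ^+ q;
      v ord0 (inord 1) / v ord0 (inord 2);
      (v ord0 (inord 1) / v ord0 (inord 2)) ^+ q; 1]`_k.
Proof. by move=> k5; rewrite mxE inordK. Qed.

Lemma bbZ c (v : 'rV[F]_3) : c != 0 -> bb q (c *: v) = bb q v.
Proof.
move=> c0; have e k : c * v ord0 (inord k) / (c * v ord0 (inord 2))
    = v ord0 (inord k) / v ord0 (inord 2).
  by rewrite invfM mulrACA divff // mul1r.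
by rewrite /bb !mxE !e.
Qed.

Lemma gptE (P : 'rV[F]_3) k : (k < 5)%N -> gpt P ord0 (inord k) =
  [:: P ord0 (inord 0); 0; P ord0 (inord 1); 0; 0]`_k.
Proof. by move=> k5; rewrite mxE inordK. Qed.

Lemma conj5E (w : 'rV[F]_5) k : (k < 5)%N -> conj5 q w ord0 (inord k) =
  [:: w ord0 (inord 1) ^+ q; w ord0 (inord 0) ^+ q; w ord0 (inord 3) ^+ q;
      w ord0 (inord 2) ^+ q; w ord0 (inord 4) ^+ q]`_k.
Proof. by move=> k5; rewrite mxE inordK. Qed.

Lemma linf_neq0 (P : 'rV[F]_3) : P != 0 -> on_linf P ->
  P ord0 (inord 0) != 0 \/ P ord0 (inord 1) != 0.
Proof.
move=> P0 /eqP P2; have [P_0|] := eqVneq (P ord0 (inord 0)) 0; last by left.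
have [P_1|] := eqVneq (P ord0 (inord 1)) 0; last by right.
by case/eqP: P0; apply: eq_row3; rewrite ?P_0 ?P_1 ?P2 mxE.
Qed.

Lemma gpt_neq0 (P : 'rV[F]_3) : P != 0 -> on_linf P -> gpt P != 0.
Proof.
move=> P0 /(linf_neq0 P0) P01; apply/eqP => /rowP gP0.
have := gP0 (inord 0); have := gP0 (inord 2); rewrite !gptE // !mxE /=.
by case: P01 => /eqP + P_1 P_0; [apply; rewrite P_0 | apply; rewrite P_1].
Qed.

Lemma conj5_gpt_neq0 (P : 'rV[F]_3) : P != 0 -> on_linf P -> conj5 q (gpt P) != 0.
Proof.
move=> P0 /(linf_neq0 P0) P01; apply/eqP => /rowP cP0.
have := cP0 (inord 1); have := cP0 (inord 3); rewrite !conj5E // !gptE // !mxE /=.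
by move=> /eqP P_1 /eqP P_0; case: P01 => /negP; apply;
  [move: P_0 | move: P_1]; rewrite expf_eq0 => /andP[].
Qed.

End BruckBoseCoordinates.

Section TangentConicAtInfinity.
Variables (F : finFieldType) (q : nat) (R : 'M[F]_3).
Hypotheses (cardF : #|F| = (q ^ 2)%N) (R_unit : R \in unitmx).
Local Notation r i j := (R (inord i) (inord j)).
Hypotheses (r22 : r 2 2 = 0) (r12 : r 1 2 != 0).
Hypothesis r_affine : forall t, Fq q t -> r 0 2 + r 1 2 * t != 0.

Let R_free : row_free R. Proof. by rewrite row_free_unit. Qed.

Definition xc j (t : F) := r 0 j + r 1 j * t + r 2 j * t ^+ 2.
Definition xcq j (t : F) := r 0 j ^+ q + r 1 j ^+ q * t + r 2 j ^+ q * t ^+ 2.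
Definition linf_param := - r 0 2 / r 1 2.
Local Notation s := linf_param.

Lemma xc_mon j t : (j < 3)%N -> (mon 2 t *m R) ord0 (inord j) = xc j t.
Proof. by move=> j3; rewrite mulmx_row3E !monE // /xc; ring. Qed.

Lemma xcq_frob j t : xcq j (t ^+ q) = xc j t ^+ q.
Proof. by rewrite /xc /xcq !(frobD cardF) !exprMn [t ^+ q ^+ 2]expr2. Qed.

Lemma xcq_Fq j t : Fq q t -> xcq j t = xc j t ^+ q.
Proof. by move/eqP=> {1}<-; rewrite xcq_frob. Qed.

Lemma xc2E t : xc 2 t = r 0 2 + r 1 2 * t.
Proof. by rewrite /xc r22 mul0r addr0. Qed.

Lemma xcq2E t : xcq 2 t = r 0 2 ^+ q + r 1 2 ^+ q * t.
Proof. by rewrite /xcq r22 expr0n eqn0Ngt ltnW ?(q_gt1 cardF) // mul0r addr0. Qed.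

Lemma xc2_eq0 u : xc 2 u = 0 <-> u = s.
Proof.
rewrite xc2E /s; split=> [/eqP|->]; last by field.
by rewrite addr_eq0 => /eqP->; field.
Qed.

Lemma xcq2_eq0 u : xcq 2 u = 0 <-> u = s ^+ q.
Proof.
have r12q : r 1 2 ^+ q != 0 by rewrite expf_neq0.
rewrite xcq2E /s expr_div_n (frobN cardF); split=> [/eqP|->]; last by field.
by rewrite addr_eq0 => /eqP->; field.
Qed.

Lemma xc2_linf_param : xc 2 s = 0.
Proof. exact/xc2_eq0. Qed.

Lemma linf_param_notFq : ~~ Fq q s.
Proof. by apply/negP => /r_affine; rewrite -xc2E xc2_linf_param eqxx. Qed.

Lemma xc2_frob_neq0 : xc 2 (s ^+ q) != 0.
Proof.
by apply/eqP => /xc2_eq0 sq_s; move: linf_param_notFq; rewrite /Fq sq_s eqxx.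
Qed.

Lemma xcq2_linf_param_neq0 : xcq 2 s != 0.
Proof.
by apply/eqP => /xcq2_eq0 s_sq; move: linf_param_notFq; rewrite /Fq -s_sq eqxx.
Qed.

Lemma xc_linf_param_neq0 : xc 0 s != 0 \/ xc 1 s != 0.
Proof.
have := mon_mulmx_neq0 s R_free.
have [xc0|] := eqVneq (xc 0 s) 0; last by left.
have [xc1|] := eqVneq (xc 1 s) 0; last by right.
suff -> : mon 2 s *m R = 0 by rewrite eqxx.
by apply: eq_row3; rewrite !xc_mon // ?xc0 ?xc1 ?xc2_linf_param mxE.
Qed.

Definition mul_coefs (x0 x1 x2 l0 l1 : F) : seq F :=
  [:: x0 * l0; x0 * l1 + x1 * l0; x1 * l1 + x2 * l0; x2 * l1].

(* Row [k] holds the coefficients of [t^k] in the coordinates of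
   [bb q (mon 2 t *m R)] multiplied by [xc 2 t * xcq 2 t], for [t] in GF(q),
   where [xcq j t = xc j t ^+ q]. *)
Definition cubic_mx : 'M[F]_(4, 5) := \matrix_(k < 4, j < 5) (nth [::]
  [:: mul_coefs (r 0 0) (r 1 0) (r 2 0) (r 0 2 ^+ q) (r 1 2 ^+ q);
      mul_coefs (r 0 0 ^+ q) (r 1 0 ^+ q) (r 2 0 ^+ q) (r 0 2) (r 1 2);
      mul_coefs (r 0 1) (r 1 1) (r 2 1) (r 0 2 ^+ q) (r 1 2 ^+ q);
      mul_coefs (r 0 1 ^+ q) (r 1 1 ^+ q) (r 2 1 ^+ q) (r 0 2) (r 1 2);
      mul_coefs (r 0 2) (r 1 2) 0 (r 0 2 ^+ q) (r 1 2 ^+ q)] j)`_k.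

Lemma cubic_mx_monE t j : (j < 5)%N -> (mon 3 t *m cubic_mx) ord0 (inord j) =
  [:: xc 0 t * xcq 2 t; xcq 0 t * xc 2 t; xc 1 t * xcq 2 t; xcq 1 t * xc 2 t;
      xc 2 t * xcq 2 t]`_j.
Proof.
move=> j5; rewrite mulmx_row4E !mxE !inordK // xc2E xcq2E /xc /xcq.
by case: j j5 => [|[|[|[|[|j]]]]] //= _; ring.
Qed.

Lemma cubic_mx_infE j : (j < 5)%N -> (mon_inf F 3 *m cubic_mx) ord0 (inord j) =
  [:: r 2 0 * r 1 2 ^+ q; r 2 0 ^+ q * r 1 2; r 2 1 * r 1 2 ^+ q;
      r 2 1 ^+ q * r 1 2; 0]`_j.
Proof.
move=> j5; rewrite mulmx_row4E !mxE !inordK //=.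
by case: j j5 => [|[|[|[|[|j]]]]] //= _; ring.
Qed.

Lemma bb_mon t : Fq q t -> pt_eq (bb q (mon 2 t *m R)) (mon 3 t *m cubic_mx).
Proof.
move=> Ft; have xc2_neq0 : xc 2 t != 0 by rewrite xc2E r_affine.
apply/pt_eqP; split.
  apply/eqP => /rowP /(_ (inord 4)); rewrite bbE //= mxE.
  by move/eqP; rewrite oner_eq0.
exists (xc 2 t * xcq 2 t); first by rewrite mulf_neq0 // xcq_Fq // expf_neq0.
apply: eq_row5; rewrite cubic_mx_monE // mxE bbE //= ?xc_mon // ?xcq_Fq //.
all: by rewrite ?expr_div_n; field; rewrite ?expf_neq0.
Qed.

Lemma bb_cubic X :
  rnc (Fq q) R X -> ~~ on_linf X -> twisted_cubic cubic_mx (bb q X).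
Proof.
case=> [[t Ft]|] /pt_eq_sym/pt_eqP[_ [c c0 ->]].
  by rewrite bbZ // => _; left; exists t => //; apply: bb_mon.
by rewrite /on_linf mxE mulmx_row3E !mon_infE //= r22 !(mul0r, mulr0, add0r) eqxx.
Qed.

Lemma twisted_cubic_mon (K : 'M[F]_(4, 5)) :
  (forall X, rnc (Fq q) R X -> ~~ on_linf X -> twisted_cubic K (bb q X)) ->
  forall t, Fq q t -> twisted_cubic K (mon 3 t *m cubic_mx).
Proof.
move=> K_bb t Ft; apply: rnc_pt_eq (bb_mon Ft); apply: K_bb; first exact: rnc_mon.
by rewrite /on_linf xc_mon // xc2E r_affine.
Qed.

Lemma cubic_mx_free : row_free cubic_mx.
Proof.
apply: inj_row_free => w wK.
have e j : (j < 5)%N -> (w *m cubic_mx) ord0 (inord j) = 0 by rewrite wK mxE.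
move: (e 0%N isT) (e 1%N isT) (e 2%N isT) (e 3%N isT) (e 4%N isT).
rewrite !mulmx_row4E !mxE !inordK //=.
set w0 := w ord0 (inord 0); set w1 := w ord0 (inord 1).
set w2 := w ord0 (inord 2); set w3 := w ord0 (inord 3).
move=> e0 e1 e2 e3 e4.
have r12q : r 1 2 ^+ q != 0 by rewrite expf_neq0.
have sq : s ^+ q = - r 0 2 ^+ q / r 1 2 ^+ q by rewrite expr_div_n (frobN cardF).
(* columns 0, 2 and 4 of [w *m cubic_mx] are the coordinates of [U *m R] *)
pose U : 'rV[F]_3 := \row_(i < 3) [:: w0 * r 0 2 ^+ q + w1 * r 1 2 ^+ q;
  w1 * r 0 2 ^+ q + w2 * r 1 2 ^+ q; w2 * r 0 2 ^+ q + w3 * r 1 2 ^+ q]`_i.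
have /rowP U0 : U = 0.
  apply/eqP; rewrite -(mulmx_free_eq0 _ R_free).
  apply/eqP/eq_row3; rewrite mulmx_row3E !mxE !inordK //=.
  - by rewrite -e0; ring.
  - by rewrite -e2; ring.
  - by rewrite -e4 r22; ring.
have next (x y : F) : x * r 0 2 ^+ q + y * r 1 2 ^+ q = 0 -> y = s ^+ q * x.
  move=> xy; rewrite sq; apply/eqP.
  by rewrite -subr_eq0 -(mulIr_eq0 _ (mulIf r12q)) -xy; apply/eqP; field.
have w1E : w1 = s ^+ q * w0.
  by apply: next; have := U0 (inord 0); rewrite !mxE inordK.
have w2E : w2 = s ^+ q * w1.
  by apply: next; have := U0 (inord 1); rewrite !mxE inordK.
have w3E : w3 = s ^+ q * w2.
  by apply: next; have := U0 (inord 2); rewrite !mxE inordK.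
have w0_0 : w0 = 0.
  have f j : (j < 2)%N -> w0 * xc 2 (s ^+ q) * xc j s ^+ q = 0.
    case: j => [|[|//]] _; rewrite -xcq_frob /xcq xc2E; [rewrite -e1 | rewrite -e3];
    by rewrite w3E w2E w1E; ring.
  have [xc_neq0|xc_neq0] := xc_linf_param_neq0;
    [move: (f 0%N isT) | move: (f 1%N isT)]; move/eqP;
    rewrite !mulf_eq0 (negPf xc2_frob_neq0) expf_eq0 (negPf xc_neq0) andbF !orbF;
  by move/eqP.
by apply: eq_row4; rewrite !mxE -/w0 -/w1 -/w2 -/w3 ?w3E ?w2E ?w1E w0_0 ?mulr0.
Qed.

Lemma conic_linf P : on_linf P -> ~~ pt_eq P (mon_inf F 2 *m R) ->
  conic R P <-> pt_eq (mon 2 s *m R) P.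
Proof.
move=> P_linf P_T; split; last by move=> P_s; left; exists s; rewrite // pt_eq_sym.
case=> [[u _ /pt_eq_sym P_u]|P_inf]; last by rewrite P_inf in P_T.
have /pt_eqP[_ [c c0 /matrixP /(_ ord0 (inord 2))]] := P_u.
rewrite mxE xc_mon // (eqP P_linf) => /esym/eqP.
by rewrite mulf_eq0 (negPf c0) => /eqP/xc2_eq0 <-.
Qed.

Lemma gpt_cubic_mon u P : P != 0 -> on_linf P ->
  pt_eq (gpt P) (mon 3 u *m cubic_mx) -> pt_eq (mon 2 s *m R) P.
Proof.
move=> P0 P_linf /pt_eqP[_ [c c0 E]]; have /eqP P2 := P_linf.
have e k : (k < 5)%N ->
    (mon 3 u *m cubic_mx) ord0 (inord k) = c * gpt P ord0 (inord k).
  by move=> k5; rewrite E mxE.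
move: (e 0%N isT) (e 2%N isT) (e 4%N isT); rewrite !cubic_mx_monE // !gptE //=.
rewrite mulr0 => e0 e2 /eqP; rewrite mulf_eq0 => /orP[/eqP/xc2_eq0 us|/eqP xcq0].
  subst u; apply/pt_eqP; split; first exact: mon_mulmx_neq0.
  exists (xcq 2 s / c); first by rewrite mulf_neq0 ?invr_eq0 ?xcq2_linf_param_neq0.
  apply: eq_row3; rewrite mxE ?xc_mon // ?P2 ?xc2_linf_param ?mulr0 //.
    by rewrite -(mulKf c0 (P ord0 (inord 0))) -e0; field.
  by rewrite -(mulKf c0 (P ord0 (inord 1))) -e2; field.
move: e0 e2; rewrite xcq0 !mulr0 => /esym/eqP + /esym/eqP.
rewrite !mulf_eq0 (negPf c0) /= => /eqP P_0 /eqP P_1.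
by case: (linf_neq0 P0 P_linf); rewrite ?P_0 ?P_1 eqxx.
Qed.

Lemma gpt_cubic_mon_inf P : ~~ pt_eq (gpt P) (mon_inf F 3 *m cubic_mx).
Proof.
apply/negP => /pt_eqP[_ [c c0 E]].
have e k : (k < 5)%N ->
    (mon_inf F 3 *m cubic_mx) ord0 (inord k) = c * gpt P ord0 (inord k).
  by move=> k5; rewrite E mxE.
move: (e 1%N isT) (e 3%N isT); rewrite !cubic_mx_infE // !gptE //= mulr0.
move=> /eqP + /eqP; rewrite !mulf_eq0 (negPf r12) !orbF !expf_eq0.
move=> /andP[_ /eqP r20] /andP[_ /eqP r21].
have := mon_inf_mulmx_neq0 R_free.
suff -> : mon_inf F 2 *m R = 0 by rewrite eqxx.
by apply: eq_row3; rewrite mulmx_row3E !mxE !inordK //= ?r20 ?r21 ?r22; ring.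
Qed.

Lemma linf_param_gpt P : P != 0 -> on_linf P ->
  pt_eq (mon 2 s *m R) P -> pt_eq (gpt P) (mon 3 s *m cubic_mx).
Proof.
move=> P0 P_linf /pt_eqP[_ [c c0 E]].
have P0E : P ord0 (inord 0) = c * xc 0 s by rewrite E mxE xc_mon.
have P1E : P ord0 (inord 1) = c * xc 1 s by rewrite E mxE xc_mon.
apply/pt_eqP; split; first exact: gpt_neq0.
exists (xcq 2 s / c); first by rewrite mulf_neq0 ?invr_eq0 ?xcq2_linf_param_neq0.
apply: eq_row5; rewrite cubic_mx_monE // mxE gptE //=.
all: by rewrite ?P0E ?P1E ?xc2_linf_param; field.
Qed.

Lemma cubic_gpt P : P != 0 -> on_linf P ->
  twisted_cubic cubic_mx (gpt P) <-> pt_eq (mon 2 s *m R) P.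
Proof.
move=> P0 P_linf; split=> [[[u _]|] | P_s].
- exact: gpt_cubic_mon.
- by rewrite (negPf (gpt_cubic_mon_inf P)).
- by left; exists s => //; apply: linf_param_gpt.
Qed.

Lemma cubic_conj5_gpt P : P != 0 -> on_linf P ->
  pt_eq (mon 2 s *m R) P -> twisted_cubic cubic_mx (conj5 q (gpt P)).
Proof.
move=> P0 P_linf /pt_eqP[_ [c c0 E]].
have P0E : P ord0 (inord 0) = c * xc 0 s by rewrite E mxE xc_mon.
have P1E : P ord0 (inord 1) = c * xc 1 s by rewrite E mxE xc_mon.
have xcq2sq : xcq 2 (s ^+ q) = 0 by apply/xcq2_eq0.
have zq : (0 : F) ^+ q = 0 by rewrite expr0n eqn0Ngt ltnW // (q_gt1 cardF).
have cq : c ^+ q != 0 by rewrite expf_neq0.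
left; exists (s ^+ q) => //; apply/pt_eqP; split; first exact: conj5_gpt_neq0.
exists (xc 2 (s ^+ q) / c ^+ q).
  by rewrite mulf_neq0 ?invr_eq0 ?xc2_frob_neq0.
apply: eq_row5; rewrite cubic_mx_monE // mxE conj5E // !gptE //= ?xcq2sq ?zq.
all: rewrite ?P0E ?P1E ?[(c * _) ^+ q]exprMn ?xcq_frob; field; exact: cq.
Qed.

End TangentConicAtInfinity.

Theorem corollary5p7 (F : finFieldType) (q : nat) (A N : 'M[F]_3)
    (T : 'rV[F]_3) :
  #|F| = (q ^ 2)%N -> (5 < q)%N ->
  A \in unitmx -> N \in unitmx -> (forall i j, Fq q (N i j)) ->
  (* B = baer_subplane q A is tangent to l_oo, with B cap l_oo = {T} *)
  baer_subplane q A T -> on_linf T ->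
  (forall v, baer_subplane q A v -> on_linf v -> pt_eq v T) ->
  (* T lies on the F_q-conic C = fq_conic q N A *)
  fq_conic q N A T ->
  (* the conic C^+ and the twisted cubic [C]^* exist ... *)
  ((exists M : 'M[F]_3, M \in unitmx /\
      (forall v, fq_conic q N A v -> conic M v)) /\
   (exists K : 'M[F]_(4, 5), row_free K /\
      (forall X, fq_conic q N A X -> ~~ on_linf X -> twisted_cubic K (bb q X))))
  /\
  (* ... and for every such C^+ and [C]^*, and every P on l_oo, P <> T : *)
  (forall (M : 'M[F]_3) (K : 'M[F]_(4, 5)),
     M \in unitmx -> (forall v, fq_conic q N A v -> conic M v) ->
     row_free K ->
     (forall X, fq_conic q N A X -> ~~ on_linf X -> twisted_cubic K (bb q X)) ->
     forall P : 'rV[F]_3, P != 0 -> on_linf P -> ~~ pt_eq P T ->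
       (conic M P <->
        twisted_cubic K (gpt P) /\ twisted_cubic K (conj5 q (gpt P)))).
Proof.
move=> cardF q_gt5 A_unit N_unit N_Fq _ T_linf B_tangent T_C.
have q_ge7 := q_gt5_ge7 cardF q_gt5.
have q_ge5 := leq_trans (isT : (5 <= 7)%N) q_ge7.
have [R [R_unit C_R T_inf [r22 r12 r_affine]]] :=
  fq_conic_tangent_normal_form cardF A_unit N_unit N_Fq T_linf B_tangent T_C.
have cubic_free := cubic_mx_free cardF R_unit r22 r12 r_affine.
split; [split|].
- exists (N *m A); split=> [|v [[t _ v_t]|v_inf]]; last by right.
    by rewrite unitmx_mul N_unit A_unit.
  by left; exists t.
- exists (cubic_mx q R); split=> // X /C_R; exact: bb_cubic.
move=> M K M_unit M_C K_free K_C P P0 P_linf P_T.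
have P_inf : ~~ pt_eq P (mon_inf F 2 *m R).
  by apply: contra P_T => /pt_eq_trans; apply; apply: pt_eq_sym.
rewrite (conic_eq cardF q_ge5 M_unit R_unit _ P0); last first.
  by move=> t Ft; apply/M_C/C_R/rnc_mon; rewrite ?row_free_unit.
have K_C' := twisted_cubic_mon cardF R_unit r22 r_affine
  (fun X => K_C X \o (C_R X).1).
have K_eq := twisted_cubic_eq cardF q_ge7 cubic_free K_free K_C'.
rewrite conic_linf // !K_eq ?gpt_neq0 ?conj5_gpt_neq0 // cubic_gpt //.
by split=> [P_s | []//]; split=> //; apply: cubic_conj5_gpt.
Qed.
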